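(* Let $G$ be a countably based profinite group with normalised Haar measure $\mu$, let $x\in G$, and let $(N_i)_{i\geq1}$ be a descending chain of open normal subgroups of $G$ with $\bigcap_i N_i=1$. Define $c_1(x)=\sup_{i\geq1}|C_{G/N_i}(xN_i)|$, $c_2(x)=\sup_{N\trianglelefteq_o G}|C_{G/N}(xN)|$, and $c_3(x)=\sup_{K\trianglelefteq G}|C_{G/K}(xK)|$ (with $K$ ranging over closed normal subgroups, and $c_3(x)=\infty$ if some $C_{G/K}(xK)$ is infinite). Then $c_1(x)=c_2(x)=c_3(x)=:c(x)$ and $\mu(x^G)=1/c(x)$ (interpreted as $0$ if $c(x)=\infty$), where $x^G=\{g^{-1}xg: g\in G\}$.
   Context: $N\trianglelefteq_o G$ means $N$ is an open normal subgroup of $G$. *)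

From HB Require Import structures.
From mathcomp Require Import all_boot all_order all_algebra.
From mathcomp Require Import all_classical all_reals all_analysis.
Set Implicit Arguments. Unset Strict Implicit. Unset Printing Implicit Defensive.
Import Order.TTheory GRing.Theory Num.Theory.
Local Open Scope classical_set_scope.
Local Open Scope ereal_scope.

(* A profinite group: a compact, Hausdorff, totally disconnected topological
   group.  The carrier is a pointed topological space (pointedness is harmless:
   a group is inhabited by its identity). *)
Record profinite_group := ProfiniteGroup {
  pg_sort :> ptopologicalType;
  pg_mul : pg_sort -> pg_sort -> pg_sort;
  pg_inv : pg_sort -> pg_sort;
  pg_one : pg_sort;
  pg_mulA : forall a b c, pg_mul a (pg_mul b c) = pg_mul (pg_mul a b) c;
  pg_mul1g : forall a, pg_mul pg_one a = a;
  pg_mulg1 : forall a, pg_mul a pg_one = a;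
  pg_mulVg : forall a, pg_mul (pg_inv a) a = pg_one;
  pg_mulgV : forall a, pg_mul a (pg_inv a) = pg_one;
  pg_mul_cont : continuous (fun p : pg_sort * pg_sort => pg_mul p.1 p.2);
  pg_inv_cont : continuous pg_inv;
  pg_compact : compact [set: pg_sort];
  pg_hausdorff : hausdorff_space pg_sort;
  pg_tdisc : totally_disconnected [set: pg_sort] }.

Section Defs.
Variable G : profinite_group.
Local Notation "a * b" := (pg_mul a b).
Local Notation "a ^-1" := (pg_inv a).

Definition is_normal_subgroup (H : set G) : Prop :=
  [/\ H (pg_one G),
      (forall a b, H a -> H b -> H (a * b ^-1)) &
      (forall g h, H h -> H (g ^-1 * (h * g)))].

Definition open_normal (N : set G) : Prop := is_normal_subgroup N /\ open N.
Definition closed_normal (K : set G) : Prop := is_normal_subgroup K /\ closed K.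

Definition lcoset (g : G) (H : set G) : set G := [set g * h | h in H].
Definition setmul (A B : set G) : set G := [set a * b | a in A & b in B].
Definition quot (H : set G) : set (set G) := [set lcoset g H | g in [set: G]].
Definition cent_quot (H : set G) (x : G) : set (set G) :=
  [set C | quot H C /\ setmul C (lcoset x H) = setmul (lcoset x H) C].

Definition conj_class (x : G) : set G := [set g ^-1 * (x * g) | g in [set: G]].

Definition borel : Type := g_sigma_algebraType (@open G).

Definition haar_prob (R : realType) (mu : probability borel R) : Prop :=
  forall (g : G) (A : set borel), measurable A ->
    mu [set g * a | a in A] = mu A.
End Defs.

(* cardinality of a set as an extended real: the supremum of the n such that
   A contains n distinct elements; i.e. |A| if A is finite, +oo otherwise *)
Definition ecard (R : realType) (T : Type) (A : set T) : \bar R :=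
  ereal_sup [set (n%:R)%:E | n in [set n : nat | (`I_n #<= A)%card]].

From HB Require Import structures.
From mathcomp Require Import all_boot all_order all_algebra.
From mathcomp Require Import all_classical all_reals all_analysis.
From mathcomp Require Import zify.
Import Order.TTheory GRing.Theory Num.Theory.
Local Open Scope classical_set_scope.
Local Open Scope ereal_scope.
Set Implicit Arguments. Unset Strict Implicit. Unset Printing Implicit Defensive.

(* For an open normal subgroup N the quotient G/N is finite and, by
   invariance, each coset of N has measure 1/|G:N|.  The set x^G N is the union
   of the cosets in the conjugacy class of xN, so the orbit-stabiliser formula
   in G/N gives mu(x^G N) = 1/|C_{G/N}(xN)|; as x^G N shrinks with N, the order
   |C_{G/N}(xN)| grows as N shrinks.  Open normal subgroups are closed, so
   c1 <= c2 <= c3.  Conversely, given a closed normal K and m distinct cosets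
   g_j K commuting with xK, the finitely many g_j^-1 g_k (j <> k) lie outside
   the closed set K, hence (by compactness) outside N_i K for i large: the
   cosets stay distinct in G/N_i K, so |C_{G/N_i}(xN_i)| >= m and c3 <= c1.
   Finally x^G is closed, hence the decreasing intersection of the x^G N_i,
   and continuity of mu from above gives mu(x^G) = lim 1/|C_{G/N_i}(xN_i)|. *)

Local Notation "a ⋅ b" := (pg_mul a b) (at level 40, left associativity).
Local Notation "a ^-1" := (pg_inv a).

Section Group.
Variable G : profinite_group.
Implicit Types a b c g x : G.
Local Notation one := (pg_one G).

Lemma pg_mulKg a b : a^-1 ⋅ (a ⋅ b) = b.
Proof. by rewrite pg_mulA pg_mulVg pg_mul1g. Qed.

Lemma pg_mulKVg a b : a ⋅ (a^-1 ⋅ b) = b.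
Proof. by rewrite pg_mulA pg_mulgV pg_mul1g. Qed.

Lemma pg_mulgK a b : b ⋅ a ⋅ a^-1 = b.
Proof. by rewrite -pg_mulA pg_mulgV pg_mulg1. Qed.

Lemma pg_mulgKV a b : b ⋅ a^-1 ⋅ a = b.
Proof. by rewrite -pg_mulA pg_mulVg pg_mulg1. Qed.

Lemma pg_invK a : (a^-1)^-1 = a.
Proof. by rewrite -[LHS]pg_mulg1 -(pg_mulVg a) pg_mulKg. Qed.

Lemma pg_invM a b : (a ⋅ b)^-1 = b^-1 ⋅ a^-1.
Proof.
rewrite -[RHS]pg_mulg1 -(pg_mulgV (a ⋅ b)) pg_mulA.
by rewrite -[b^-1 ⋅ a^-1 ⋅ (a ⋅ b)]pg_mulA pg_mulKg pg_mulVg pg_mul1g.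
Qed.

Definition pg_conj x g : G := g^-1 ⋅ (x ⋅ g).

Definition eqmod (H : set G) a b : Prop := H (a^-1 ⋅ b).

Lemma eqmodMl (H : set G) c a b : eqmod H a b -> eqmod H (c ⋅ a) (c ⋅ b).
Proof. by rewrite /eqmod pg_invM -pg_mulA pg_mulKg. Qed.

Lemma setmul_bigcup_lcoset (A H : set G) :
  setmul A H = \bigcup_(a in A) lcoset a H.
Proof. by apply/seteqP; split => y [a Aa [h Hh <-]]; exists a => //; exists h. Qed.

Lemma setmul_subl (A H : set G) : H one -> A `<=` setmul A H.
Proof. by move=> H1 a Aa; exists a => //; exists one => //; rewrite pg_mulg1. Qed.

Lemma setmul_subr (A H : set G) : A one -> H `<=` setmul A H.
Proof. by move=> A1 h Hh; exists one => //; exists h => //; rewrite pg_mul1g. Qed.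

Lemma setmulS (A H M : set G) : H `<=` M -> setmul A H `<=` setmul A M.
Proof. by move=> HM y [a Aa [h Hh <-]]; exists a => //; exists h => //; apply: HM. Qed.

Section Normal.
Variable H : set G.
Hypothesis nH : is_normal_subgroup H.

Lemma normal1 : H one. Proof. by case: nH. Qed.

Lemma normalMV a b : H a -> H b -> H (a ⋅ b^-1).
Proof. by case: nH => _ + _; apply. Qed.

Lemma normalV a : H a -> H a^-1.
Proof. by move=> Ha; rewrite -[a^-1]pg_mul1g; apply: normalMV => //; apply: normal1. Qed.

Lemma normalM a b : H a -> H b -> H (a ⋅ b).
Proof. by move=> Ha Hb; rewrite -[b]pg_invK; apply: normalMV => //; apply: normalV. Qed.

Lemma normalJ g h : H h -> H (g^-1 ⋅ (h ⋅ g)).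
Proof. by case: nH => _ _; apply. Qed.

Lemma normalJV g h : H h -> H (g ⋅ (h ⋅ g^-1)).
Proof. by move=> Hh; have := normalJ g^-1 Hh; rewrite pg_invK. Qed.

Lemma eqmod_refl a : eqmod H a a.
Proof. by rewrite /eqmod pg_mulVg; apply: normal1. Qed.

Lemma eqmod_sym a b : eqmod H a b -> eqmod H b a.
Proof. by move=> /normalV; rewrite /eqmod pg_invM pg_invK. Qed.

Lemma eqmod_trans a b c : eqmod H a b -> eqmod H b c -> eqmod H a c.
Proof. by move=> eab ebc; have := normalM eab ebc; rewrite /eqmod -pg_mulA pg_mulKVg. Qed.

Lemma eqmodMr c a b : eqmod H a b -> eqmod H (a ⋅ c) (b ⋅ c).
Proof. by move=> eab; have := normalJ c eab; rewrite /eqmod pg_invM !pg_mulA. Qed.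

Lemma eqmodM a a' b b' : eqmod H a a' -> eqmod H b b' -> eqmod H (a ⋅ b) (a' ⋅ b').
Proof. by move=> ea eb; apply: eqmod_trans (eqmodMr b ea) _; apply: eqmodMl. Qed.

Lemma eqmodV a b : eqmod H a b -> eqmod H a^-1 b^-1.
Proof.
move=> eab; have := normalJV a (normalV eab).
by rewrite /eqmod pg_invM !pg_invK pg_mulgK.
Qed.

Lemma eqmod_conj x a b : eqmod H a b -> eqmod H (pg_conj x a) (pg_conj x b).
Proof. by move=> eab; apply: eqmodM (eqmodV eab) (eqmodMl x eab). Qed.

Lemma eqmod_commute x a b : eqmod H a b ->
  eqmod H (a ⋅ x) (x ⋅ a) -> eqmod H (b ⋅ x) (x ⋅ b).
Proof.
move=> eab ea; apply: eqmod_trans (eqmod_sym (eqmodMr x eab)) _.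
exact: eqmod_trans ea (eqmodMl x eab).
Qed.

Lemma lcosetE g : lcoset g H = [set y | eqmod H g y].
Proof.
apply/seteqP; split => y; first by case=> h Hh <-; rewrite /eqmod /= pg_mulKg.
by move=> /= e; exists (g^-1 ⋅ y) => //; rewrite pg_mulKVg.
Qed.

Lemma lcoset_refl g : lcoset g H g.
Proof. by rewrite lcosetE; apply: eqmod_refl. Qed.

Lemma eq_lcoset a b : lcoset a H = lcoset b H <-> eqmod H a b.
Proof.
rewrite !lcosetE; split => [eab|eab].
  have : [set y | eqmod H b y] b by apply: eqmod_refl.
  by rewrite -eab.
apply/seteqP; split => y /= e; last exact: eqmod_trans eab e.
exact: eqmod_trans (eqmod_sym eab) e.
Qed.

Lemma setmul_lcoset a b : setmul (lcoset a H) (lcoset b H) = lcoset (a ⋅ b) H.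
Proof.
rewrite !lcosetE; apply/seteqP; split => y.
  by case=> u /= eu [v /= ev <-]; apply: eqmodM.
move=> /= e; exists a; first exact: eqmod_refl.
exists (a^-1 ⋅ y) => /=; last by rewrite pg_mulKVg.
by have := eqmodMl a^-1 e; rewrite pg_mulKg.
Qed.

Lemma cent_quotP x C : cent_quot H x C <->
  exists2 g, C = lcoset g H & eqmod H (g ⋅ x) (x ⋅ g).
Proof.
split; last first.
  case=> g -> e; split; first by exists g.
  by rewrite !setmul_lcoset; apply/eq_lcoset.
by case=> -[g _ <-]; rewrite !setmul_lcoset => /eq_lcoset; exists g.
Qed.

Definition distinct_cent_reprs x m (g : nat -> G) : Prop :=
  (forall j, (j < m)%N -> eqmod H (g j ⋅ x) (x ⋅ g j)) /\
  (forall j k, (j < m)%N -> (k < m)%N -> eqmod H (g j) (g k) -> j = k).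

Lemma card_cent_quot_geP x m :
  (`I_m #<= cent_quot H x)%card <-> exists g : nat -> G, distinct_cent_reprs x m g.
Proof.
split.
  move/pcard_leP/injfunPex => [f f_cent f_inj].
  pose g j := xget one (f j).
  have f_coset j : (j < m)%N ->
      f j = lcoset (g j) H /\ eqmod H (g j ⋅ x) (x ⋅ g j).
    move=> jm; have [g' fj e] := (cent_quotP x (f j)).1 (f_cent j jm).
    have : f j (g j) by apply: xgetPex; exists g'; rewrite fj; apply: lcoset_refl.
    rewrite {1}fj lcosetE /= => e'.
    by split; [rewrite fj; apply/eq_lcoset | apply: eqmod_commute e].
  exists g; split => [j /f_coset[] //|j k jm km e].
  apply: f_inj; rewrite ?in_setE //.
  by rewrite (f_coset j jm).1 (f_coset k km).1; apply/eq_lcoset.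
case=> g [g_cent g_inj]; apply/pcard_leP/injfunPex.
exists (fun j => lcoset (g j) H) => [j /= jm|j k].
  by apply/cent_quotP; exists (g j) => //; apply: g_cent.
by rewrite !in_setE /= => jm km /eq_lcoset; apply: (g_inj j k).
Qed.

End Normal.

Lemma normal_setmul (A B : set G) : is_normal_subgroup A ->
  is_normal_subgroup B -> is_normal_subgroup (setmul A B).
Proof.
move=> nA nB; split.
- exact: setmul_subl (normal1 nB) _ (normal1 nA).
- move=> _ _ [a1 A1 [b1 B1 <-]] [a2 A2 [b2 B2 <-]].
  exists (a1 ⋅ a2^-1); first exact: normalMV.
  exists (a2 ⋅ ((b1 ⋅ b2^-1) ⋅ a2^-1)); first exact: normalJV (normalMV nB B1 B2).
  by rewrite pg_invM !pg_mulA pg_mulgKV.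
- move=> g _ [a Aa [b Bb <-]].
  exists (g^-1 ⋅ (a ⋅ g)); first exact: normalJ.
  exists (g^-1 ⋅ (b ⋅ g)); first exact: normalJ.
  by rewrite !pg_mulA pg_mulgK.
Qed.

End Group.

Section Topology.
Variable G : profinite_group.
Local Notation one := (pg_one G).

Lemma continuous_pg_mul (f h : G -> G) : continuous f -> continuous h ->
  continuous (fun y => f y ⋅ h y).
Proof.
move=> cf ch y.
apply: (continuous_comp (f := fun y => (f y, h y))
   (g := fun p : G * G => p.1 ⋅ p.2)); last exact: pg_mul_cont.
exact: cvg_pair (cf y) (ch y).
Qed.

Lemma continuous_pg_mull (g : G) : continuous (fun y : G => g ⋅ y).
Proof. by apply: continuous_pg_mul => y; [apply: cvg_cst | apply: cvg_id]. Qed.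

Lemma continuous_pg_mulr (g : G) : continuous (fun y : G => y ⋅ g).
Proof. by apply: continuous_pg_mul => y; [apply: cvg_id | apply: cvg_cst]. Qed.

Lemma continuous_pg_conj (x : G) : continuous (pg_conj x).
Proof. by apply: continuous_pg_mul; [apply: pg_inv_cont | apply: continuous_pg_mull]. Qed.

Lemma open_lcoset (g : G) (H : set G) : open H -> open (lcoset g H).
Proof.
move=> oH; have -> : lcoset g H = (fun y => g^-1 ⋅ y) @^-1` H.
  apply/seteqP; split => y /=; first by case=> h Hh <-; rewrite pg_mulKg.
  by move=> Hy; exists (g^-1 ⋅ y) => //; rewrite pg_mulKVg.
by apply: open_comp => // y _; apply: continuous_pg_mull.
Qed.

Lemma open_setmul (A H : set G) : open H -> open (setmul A H).
Proof.
by move=> oH; rewrite setmul_bigcup_lcoset; apply: bigcup_open => a _; apply: open_lcoset.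
Qed.

(* The complement of an open subgroup is a union of its (open) cosets. *)
Lemma open_normal_closed (H : set G) : open_normal H -> closed H.
Proof.
case=> nH oH; rewrite -openC.
have -> : ~` H = \bigcup_(g in ~` H) lcoset g H.
  apply/seteqP; split => y; first by move=> nHy; exists y => //; apply: lcoset_refl.
  case=> g nHg; rewrite lcosetE /= => e Hy; apply: nHg.
  by have := normalMV nH Hy e; rewrite pg_invM pg_invK pg_mulA pg_mulgV pg_mul1g.
by apply: bigcup_open => g _; apply: open_lcoset.
Qed.

Lemma open_mul_closed_superset (U H : set G) : open U -> U one -> U `<=` H ->
  (forall a b, H a -> H b -> H (a ⋅ b)) -> open H.
Proof.
move=> oU U1 UH HM; suff -> : H = setmul H U by apply: open_setmul.
apply/seteqP; split; first exact: setmul_subl.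
by move=> _ [h Hh [u Uu <-]]; apply: HM => //; apply: UH.
Qed.

Lemma closed_conj_class (x : G) : closed (conj_class x).
Proof.
apply: compact_closed; first exact: pg_hausdorff.
apply: continuous_compact; last exact: pg_compact.
by apply: continuous_subspaceT => g; apply: continuous_pg_conj.
Qed.

Lemma borel_measurable_open (A : set G) : open A -> measurable (A : set (borel G)).
Proof. exact: sub_sigma_algebra. Qed.

Lemma borel_measurable_closed (A : set G) : closed A -> measurable (A : set (borel G)).
Proof.
move=> cA; rewrite -[A]setCK; apply: measurableC.
by apply: borel_measurable_open; rewrite openC.
Qed.

End Topology.

Section Chain.
Variable G : profinite_group.
Local Notation one := (pg_one G).
Variable N : nat -> set G.
Hypothesis N_open_normal : forall i, (1 <= i)%N -> open_normal (N i).
Hypothesis N_decr : forall i, (1 <= i)%N -> N i.+1 `<=` N i.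
Hypothesis N_cap1 : \bigcap_(i in [set i | (1 <= i)%N]) N i = [set one].

Lemma chain_le i j : (1 <= i)%N -> (i <= j)%N -> N j `<=` N i.
Proof.
move=> i1 /subnK <-; elim: (j - i)%N => [|k IH] //=.
by rewrite addSn; apply: subset_trans IH; apply: N_decr; lia.
Qed.

(* Compactness: the open sets U and ~` N i (i >= 1) cover G. *)
Lemma chain_basis (U : set G) : open U -> U one -> exists2 i, (1 <= i)%N & N i `<=` U.
Proof.
move=> oU U1.
pose V i := if i == 0%N then U else ~` N i.
have V_open i : [set: nat] i -> open (V i).
  move=> _; rewrite /V; case: eqP => [//|/eqP i0].
  by rewrite openC; apply: open_normal_closed; apply: N_open_normal; rewrite lt0n.
have V_cover : [set: G] `<=` cover [set: nat] V.
  move=> y _; have [->|y1] := pselect (y = one); first by exists 0%N.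
  have [i i1 nNy] : exists2 i, (1 <= i)%N & ~ N i y.
    apply: contrapT => nex; apply: y1.
    suff : (\bigcap_(i in [set i | (1 <= i)%N]) N i) y by rewrite N_cap1.
    by move=> i i1; apply: contrapT => nNy; apply: nex; exists i.
  by exists i => //; rewrite /V; case: eqP i1 => // ->.
have := @pg_compact G; rewrite compact_cover => /(_ nat setT V V_open V_cover).
case=> D _ D_cover; pose m := maxn 1 (\max_(i <- finmap.enum_fset D) i).
exists m; first exact: leq_maxl.
move=> y Nmy; have [i Di] := D_cover y I.
rewrite /V; case: eqP => // /eqP i0 nNiy; exfalso; apply: nNiy.
apply: chain_le Nmy; first by rewrite lt0n.
apply: leq_trans (leq_maxr _ _); exact: (leq_bigmax_seq (F := id) i Di).
Qed.

Lemma chain_avoid_closed (K : set G) (T : eqType) (s : seq T) (h : T -> G) :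
  closed K -> {in s, forall p, ~ K (h p)} ->
  exists2 i, (1 <= i)%N & {in s, forall p n, N i n -> ~ K (n ⋅ h p)}.
Proof.
move=> cK; elim: s => [|p s IH] s_K; first by exists 1%N.
have [|i1 i11 avoid1] := IH; first by move=> q qs; apply: s_K; rewrite inE qs orbT.
have U_open : open ((fun n => n ⋅ h p) @^-1` (~` K)).
  by apply: open_comp; [move=> y _; apply: continuous_pg_mulr | rewrite openC].
have [|i2 i21 avoid2] := chain_basis U_open.
  by rewrite /= pg_mul1g; apply: s_K; rewrite mem_head.
exists (maxn i1 i2) => [|q]; first lia.
rewrite inE => /orP[/eqP -> | qs] n Nn.
  exact: avoid2 (chain_le i21 (leq_maxr i1 i2) Nn).
exact: avoid1 qs n (chain_le i11 (leq_maxl i1 i2) Nn).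
Qed.

Lemma bigcap_setmul_chain (A : set G) i0 : closed A -> (1 <= i0)%N ->
  \bigcap_n setmul A (N (n + i0)) = A.
Proof.
move=> cA i01; apply/seteqP; split; last first.
  by move=> a Aa n _; apply: setmul_subl Aa; apply: normal1 (N_open_normal _).1; lia.
move=> y yA; apply: contrapT => nAy.
have U_open : open ((fun n => y ⋅ n) @^-1` (~` A)).
  by apply: open_comp; [move=> z _; apply: continuous_pg_mull | rewrite openC].
have [|i i1 NiU] := chain_basis U_open; first by rewrite /= pg_mulg1.
pose j := maxn i i0; have j1 : (1 <= j)%N by lia.
have := yA (j - i0)%N I; rewrite subnK ?leq_maxr // => -[a Aa [n Njn e]].
have /NiU /= := chain_le i1 (leq_maxl i i0) (normalV (N_open_normal j1).1 Njn).
by rewrite -e pg_mulgK.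
Qed.

End Chain.

Section OpenNormalCount.
Variables (G : profinite_group) (R : realType) (mu : probability (borel G) R).
Hypothesis mu_haar : haar_prob mu.
Variables (x : G) (N : set G).
Hypotheses (nN : is_normal_subgroup N) (oN : open N).
Local Notation one := (pg_one G).

Definition coset_repr (g : G) : G := xget one (lcoset g N).

Lemma eqmod_coset_repr g : eqmod N g (coset_repr g).
Proof.
have := @xgetPex _ one (lcoset g N) (ex_intro _ g (lcoset_refl nN g)).
by rewrite {1}lcosetE.
Qed.

Lemma coset_repr_eqmod a b : eqmod N a b -> coset_repr a = coset_repr b.
Proof. by move=> e; rewrite /coset_repr (proj2 (eq_lcoset nN a b) e). Qed.

Lemma coset_repr_id g : coset_repr (coset_repr g) = coset_repr g.
Proof. exact/esym/coset_repr_eqmod/eqmod_coset_repr. Qed.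

(* Compactness: G is covered by finitely many of the open cosets of N. *)
Lemma finite_coset_reprs : exists Q : seq G,
  [/\ uniq Q, forall g, coset_repr g \in Q & {in Q, forall q, coset_repr q = q}].
Proof.
have coset_open g : [set: G] g -> open (lcoset g N) by move=> _; apply: open_lcoset.
have coset_cover : [set: G] `<=` cover [set: G] (fun g => lcoset g N).
  by move=> y _; exists y => //; apply: lcoset_refl.
have := @pg_compact G; rewrite compact_cover => /(_ G setT _ coset_open coset_cover).
case=> D _ D_cover; exists (undup (map coset_repr (finmap.enum_fset D))); split.
- exact: undup_uniq.
- move=> g; have [d Dd] := D_cover g I; rewrite lcosetE => e.
  by rewrite mem_undup -(coset_repr_eqmod e); apply: map_f.
- by move=> q; rewrite mem_undup => /mapP[d _ ->]; apply: coset_repr_id.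
Qed.

(* G/N is identified with 'I_(size Q): a coset is numbered by the position in
   Q of its representative. *)
Section CosetIndex.
Variable Q : seq G.
Hypotheses (Q_uniq : uniq Q) (Q_repr : forall g, coset_repr g \in Q)
  (Q_fixed : {in Q, forall q, coset_repr q = q}).
Local Notation n := (size Q).

Definition index_repr (i : 'I_n) : G := nth one Q i.

Lemma index_coset_repr_lt g : (index (coset_repr g) Q < n)%N.
Proof. by rewrite index_mem. Qed.

Definition coset_index (g : G) : 'I_n := Ordinal (index_coset_repr_lt g).

Lemma coset_indexK : cancel index_repr coset_index.
Proof. by move=> i; apply: val_inj; rewrite /= Q_fixed ?mem_nth // index_uniq. Qed.

Lemma eqmod_coset_index g : eqmod N g (index_repr (coset_index g)).
Proof. by rewrite /index_repr nth_index //; apply: eqmod_coset_repr. Qed.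

Lemma coset_index_eqP a b : coset_index a = coset_index b <-> eqmod N a b.
Proof.
split => [e|e]; last by apply: val_inj; rewrite /= (coset_repr_eqmod e).
have := eqmod_coset_index b; rewrite -e => /(eqmod_sym nN).
exact: (eqmod_trans nN (eqmod_coset_index a)).
Qed.

Lemma mu_coset_index_preimage (S : {set 'I_n}) :
  mu [set y | coset_index y \in S] = (mu N *+ #|S|)%R.
Proof.
have -> : [set y | coset_index y \in S] =
    \big[setU/set0]_(i < n | i \in S) lcoset (index_repr i) N.
  apply/seteqP; split => [y /= yS|].
    rewrite (bigD1 (coset_index y)) //=; left.
    by rewrite lcosetE /=; apply/(eqmod_sym nN)/eqmod_coset_index.
  apply: (@big_ind (set G) (fun A => A `<=` [set y | coset_index y \in S])) => //.
    by move=> A B AS BS y [/AS|/BS].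
  move=> i iS y; rewrite lcosetE /= => /coset_index_eqP <-.
  by rewrite coset_indexK.
rewrite measure_bigsetU_ord //.
- rewrite (eq_bigr (fun _ => mu N)) ?sumr_const // => i _.
  exact: mu_haar (borel_measurable_open oN).
- by move=> i; apply: borel_measurable_open; apply: open_lcoset.
- move=> i j _ _ [y []]; rewrite !lcosetE /= => ei ej.
  rewrite -(coset_indexK i) -(coset_indexK j); apply/coset_index_eqP.
  exact: (eqmod_trans nN ei (eqmod_sym nN ej)).
Qed.

Definition conj_index (i : 'I_n) : 'I_n := coset_index (pg_conj x (index_repr i)).

Definition cent_index : {set 'I_n} :=
  [set i | `[< eqmod N (index_repr i ⋅ x) (x ⋅ index_repr i) >]]%SET.

Definition class_index : {set 'I_n} := [set conj_index i | i in 'I_n]%SET.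

Lemma coset_index_conj g : coset_index (pg_conj x g) = conj_index (coset_index g).
Proof. by apply/coset_index_eqP/(eqmod_conj nN)/eqmod_coset_index. Qed.

Lemma setmul_conj_class_index :
  setmul (conj_class x) N = [set y | coset_index y \in class_index].
Proof.
apply/seteqP; split => y /=.
  case=> _ [g _ <-] [h Nh <-]; apply/imsetP; exists (coset_index g) => //.
  rewrite -coset_index_conj; apply/coset_index_eqP.
  by apply: (eqmod_sym nN); rewrite /eqmod pg_mulKg.
case/imsetP => i _ /coset_index_eqP e.
exists (pg_conj x (index_repr i)); first by exists (index_repr i).
exists ((pg_conj x (index_repr i))^-1 ⋅ y); first exact: (eqmod_sym nN).
by rewrite pg_mulKVg.
Qed.

(* Right multiplication by the coset of [index_repr i0] maps the stabiliser
   [cent_index] bijectively onto the fibre of [conj_index] through [i0]. *)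
Lemma card_conj_index_fiber i0 :
  #|[set i | conj_index i == conj_index i0]%SET| = #|cent_index|.
Proof.
pose g0 := index_repr i0.
pose shift (h : 'I_n) := coset_index (index_repr h ⋅ g0).
pose unshift (i : 'I_n) := coset_index (index_repr i ⋅ g0^-1).
have shiftK : cancel shift unshift.
  move=> h; rewrite /unshift /shift -[RHS]coset_indexK; apply/coset_index_eqP.
  have := eqmodMr nN g0^-1 (eqmod_sym nN (eqmod_coset_index (index_repr h ⋅ g0))).
  by rewrite pg_mulgK.
have unshiftK : cancel unshift shift.
  move=> i; rewrite /unshift /shift -[RHS]coset_indexK; apply/coset_index_eqP.
  have := eqmodMr nN g0 (eqmod_sym nN (eqmod_coset_index (index_repr i ⋅ g0^-1))).
  by rewrite pg_mulgKV.
suff -> : [set i | conj_index i == conj_index i0]%SET = shift @: cent_index.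
  by rewrite card_imset //; apply: can_inj shiftK.
apply/setP => i; rewrite inE; apply/eqP/imsetP => [e|[h]].
  exists (unshift i); last by rewrite unshiftK.
  rewrite inE; apply/asboolP; apply: (eqmod_commute nN (eqmod_coset_index _)).
  have := eqmodMr nN g0^-1 (eqmodMl (index_repr i) ((coset_index_eqP _ _).1 e)).
  by rewrite /pg_conj pg_mulKVg !pg_mulA pg_mulgK => /(eqmod_sym nN).
rewrite inE => /asboolP h_cent ->.
rewrite /shift -coset_index_conj -[i0 in RHS]coset_indexK -coset_index_conj.
apply/coset_index_eqP.
have : eqmod N x (pg_conj x (index_repr h)).
  by have := eqmodMl (index_repr h)^-1 h_cent; rewrite pg_mulKg.
move=> /(eqmod_sym nN) /(eqmodMr nN g0) /(eqmodMl g0^-1).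
by rewrite /pg_conj pg_invM !pg_mulA.
Qed.

Lemma card_index_orbit_stabilizer : n = (#|class_index| * #|cent_index|)%N.
Proof.
have sum1_n : (\sum_(i in 'I_n) 1 = n)%N by rewrite sum1_card card_ord.
rewrite -[LHS]sum1_n (partition_big_imset conj_index) -sum_nat_const /=.
apply: eq_bigr => _ /imsetP[i0 _ ->].
by rewrite sum1_card -(card_conj_index_fiber i0); apply: eq_card => i; rewrite !inE.
Qed.

Lemma cent_index_gt0 : (0 < #|cent_index|)%N.
Proof.
apply/card_gt0P; exists (coset_index one); rewrite inE; apply/asboolP.
apply: (eqmod_commute nN (eqmod_coset_index one)).
by rewrite pg_mul1g pg_mulg1; apply: eqmod_refl.
Qed.

Lemma mu_mulrn_index : (mu N *+ n)%R = 1.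
Proof.
have := mu_coset_index_preimage [set: 'I_n]%SET; rewrite cardsT card_ord => <-.
rewrite -(probability_setT mu); congr (mu _).
by apply/seteqP; split => // y; rewrite /= inE.
Qed.

Lemma mu_setmul_conj_class :
  mu (setmul (conj_class x) N) = ((#|cent_index|%:R)^-1)%:E.
Proof.
have : (mu (setmul (conj_class x) N) *+ #|cent_index|)%R = 1.
  rewrite setmul_conj_class_index mu_coset_index_preimage -mulrnA.
  by rewrite -card_index_orbit_stabilizer mu_mulrn_index.
have := cent_index_gt0; case: #|cent_index| => // c _.
have : 0 <= mu (setmul (conj_class x) N) by [].
case: (mu _) => [r _ | _ | //] mu_c.
  have : r%:E *+ c.+1 = 1 by exact: mu_c.
  rewrite -EFin_natmul => -[rc]; congr (_%:E).
  have c_neq0 : (c.+1%:R != 0 :> R)%R by rewrite pnatr_eq0.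
  by rewrite -[r](mulfK c_neq0) mulr_natr rc mul1r.
have : +oo *+ c.+1 = 1 :> \bar R by exact: mu_c.
by rewrite enatmul_pinfty.
Qed.

Lemma le_card_cent_index m :
  (exists g : nat -> G, distinct_cent_reprs N x m g) <-> (m <= #|cent_index|)%N.
Proof.
split=> [[g [g_cent g_inj]]|mC].
  pose ig (j : 'I_m) := coset_index (g j).
  have ig_inj : injective ig.
    by move=> j k /coset_index_eqP /(g_inj _ _ (ltn_ord j) (ltn_ord k)) /val_inj.
  rewrite -[m]card_ord -(card_imset _ ig_inj); apply: subset_leq_card.
  apply/fintype.subsetP => _ /imsetP[j _ ->]; rewrite inE; apply/asboolP.
  exact: (eqmod_commute nN (eqmod_coset_index _) (g_cent _ (ltn_ord j))).
pose g j := index_repr (nth (coset_index one) (enum cent_index) j).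
have lt_size j : (j < m)%N -> (j < size (enum cent_index))%N.
  by move=> jm; rewrite -cardE (leq_trans jm mC).
have jC j : (j < m)%N -> nth (coset_index one) (enum cent_index) j \in cent_index.
  by move=> /lt_size jm; rewrite -mem_enum mem_nth.
exists g; split => [j /jC | j k jm km].
  by rewrite inE => /asboolP.
rewrite -coset_index_eqP !coset_indexK => /eqP.
by rewrite nth_uniq ?enum_uniq ?lt_size // => /eqP.
Qed.

Lemma ecard_cent_quot : ecard R (cent_quot N x) = (#|cent_index|%:R)%:E.
Proof.
apply/le_anti/andP; split.
  apply: ge_ereal_sup => _ [m /(card_cent_quot_geP nN) /le_card_cent_index mC <-].
  by rewrite lee_fin ler_nat.
apply: ereal_sup_ubound; exists #|cent_index| => //.
exact/(card_cent_quot_geP nN)/le_card_cent_index.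
Qed.

End CosetIndex.
End OpenNormalCount.

Section CentraliserOrders.
Variables (G : profinite_group) (R : realType) (mu : probability (borel G) R).
Hypothesis mu_haar : haar_prob mu.
Variable x : G.

Lemma open_normal_cent_quot (M : set G) : open_normal M -> exists c : nat,
  [/\ (0 < c)%N, ecard R (cent_quot M x) = (c%:R)%:E
    & mu (setmul (conj_class x) M) = ((c%:R)^-1)%:E].
Proof.
case=> nM oM; have [Q [Q_uniq Q_repr Q_fixed]] := finite_coset_reprs nM oM.
exists #|cent_index x M Q|; split.
- exact: cent_index_gt0.
- exact: ecard_cent_quot.
- exact: mu_setmul_conj_class.
Qed.

(* Compare the measures 1/|C_{G/A}(xA)| and 1/|C_{G/B}(xB)| of x^G A <= x^G B. *)
Lemma le_ecard_cent_quot (A B : set G) : open_normal A -> open_normal B ->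
  A `<=` B -> ecard R (cent_quot B x) <= ecard R (cent_quot A x).
Proof.
move=> oA oB AB.
have [a [a_gt0 -> mu_a]] := open_normal_cent_quot oA.
have [b [b_gt0 -> mu_b]] := open_normal_cent_quot oB.
have : mu (setmul (conj_class x) A) <= mu (setmul (conj_class x) B).
  apply: le_measure; last exact: setmulS.
    by rewrite inE; apply: borel_measurable_open; apply: open_setmul; case: oA.
  by rewrite inE; apply: borel_measurable_open; apply: open_setmul; case: oB.
rewrite mu_a mu_b !lee_fin ler_pV2 ?ler_nat //.
all: by rewrite inE /= unitfE pnatr_eq0 ltr0n -lt0n ?a_gt0 ?b_gt0.
Qed.

Lemma open_normal_setmul (M K : set G) : open_normal M -> is_normal_subgroup K ->
  open_normal (setmul M K).
Proof.
case=> nM oM nK; have nMK := normal_setmul nM nK; split => //.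
apply: (open_mul_closed_superset oM (normal1 nM)); last exact: normalM.
exact: setmul_subl (normal1 nK).
Qed.

Variable N : nat -> set G.
Hypothesis N_open_normal : forall i, (1 <= i)%N -> open_normal (N i).
Hypothesis N_decr : forall i, (1 <= i)%N -> N i.+1 `<=` N i.
Hypothesis N_cap1 : \bigcap_(i in [set i | (1 <= i)%N]) N i = [set pg_one G].

Local Notation cent i := (ecard R (cent_quot (N i) x)).
Local Notation c1 := (ereal_sup [set cent i | i in [set i | (1 <= i)%N]]).

Lemma cent_le_sup i : (1 <= i)%N -> cent i <= c1.
Proof. by move=> i1; apply: ereal_sup_ubound; exists i. Qed.

(* The finitely many quotients g_j^-1 g_k (j <> k) avoid the closed set K,
   hence they still avoid N_i K for i large. *)
Lemma distinct_cent_reprs_chain (K : set G) m g : closed_normal K ->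
  distinct_cent_reprs K x m g ->
  exists2 i, (1 <= i)%N & distinct_cent_reprs (setmul (N i) K) x m g.
Proof.
case=> nK cK [g_cent g_inj].
pose s := [seq p <- [seq (j, k) | j <- iota 0 m, k <- iota 0 m] | p.1 != p.2].
have s_avoid : {in s, forall p, ~ K ((g p.1)^-1 ⋅ g p.2)}.
  move=> p; rewrite mem_filter => /andP[jk /allpairsP[[j k] [/= jm km pjk]]].
  rewrite pjk /= in jk *; rewrite !mem_iota /= in jm km.
  by move=> /(g_inj _ _ jm km) /eqP; rewrite (negPf jk).
have [i i1 Ni_avoid] := chain_avoid_closed N_open_normal N_decr N_cap1 cK s_avoid.
have nNi := (N_open_normal i1).1.
exists i => //; split=> [j jm|j k jm km [n Nn [k' Kk' e]]].
  by apply: (setmul_subr (normal1 nNi)); apply: g_cent.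
apply: contrapT => /eqP jk.
have jk_s : (j, k) \in s.
  by rewrite mem_filter jk; apply/allpairsP; exists (j, k); rewrite !mem_iota.
by apply: (Ni_avoid _ jk_s n^-1 (normalV nNi Nn)); rewrite /= /eqmod -e pg_mulKg.
Qed.

Lemma sup_closed_le_chain :
  ereal_sup [set ecard R (cent_quot K x) | K in @closed_normal G] <= c1.
Proof.
apply: ge_ereal_sup => _ [K cK <-]; apply: ge_ereal_sup => _ [m Km <-].
have [g g_reprs] := (card_cent_quot_geP cK.1 x m).1 Km.
have [i i1 NiK_reprs] := distinct_cent_reprs_chain cK g_reprs.
have oNiK := open_normal_setmul (N_open_normal i1) cK.1.
have NiK_m : ((m%:R)%:E <= ecard R (cent_quot (setmul (N i) K) x)).
  apply: ereal_sup_ubound; exists m => //.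
  by apply/(card_cent_quot_geP oNiK.1); exists g.
apply: le_trans NiK_m (le_trans (le_ecard_cent_quot (N_open_normal i1) oNiK _) _).
  exact: setmul_subl (normal1 cK.1).
exact: cent_le_sup.
Qed.

Lemma mu_conj_class_eventually i0 r : (1 <= i0)%N ->
  (forall n, mu (setmul (conj_class x) (N (n + i0))) = r%:E) ->
  mu (conj_class x : set (borel G)) = r%:E.
Proof.
move=> i01 mu_r; pose F n := setmul (conj_class x) (N (n + i0)).
have F_meas n : measurable (F n : set (borel G)).
  have n_i0 : (1 <= n + i0)%N by lia.
  by apply: borel_measurable_open; apply: open_setmul; case: (N_open_normal n_i0).
have F_decr : {homo F : n m / (n <= m)%N >-> (m <= n)%O}.
  move=> n m nm; rewrite subsetEset; apply: setmulS; apply: chain_le => //; lia.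
have F0 : mu (F 0%N) < +oo by rewrite mu_r ltry.
have cap_F : \bigcap_n F n = conj_class x.
  by apply: bigcap_setmul_chain => //; apply: closed_conj_class.
have cap_meas : measurable (\bigcap_n F n : set (borel G)).
  by rewrite cap_F; apply: borel_measurable_closed; apply: closed_conj_class.
have := nonincreasing_cvg_mu F0 F_meas cap_meas F_decr.
have -> : mu \o F = fun=> r%:E by apply: funext => n; apply: mu_r.
by rewrite cap_F => /(cvg_unique (@ereal_hausdorff R) (cvg_cst _)) ->.
Qed.

(* The orders |C_{G/N_i}(xN_i)| are nondecreasing, so when bounded they are
   eventually equal to their maximum. *)
Lemma sup_chain_bounded B : (forall i, (1 <= i)%N -> cent i <= (B%:R)%:E) ->
  exists cm i0, [/\ (1 <= i0)%N, c1 = (cm%:R)%:E &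
    forall i, (i0 <= i)%N -> cent i = (cm%:R)%:E].
Proof.
move=> cent_le_B.
have cent_nat i : (1 <= i)%N -> exists c : nat, cent i = (c%:R)%:E.
  by move=> i1; have [c [_ -> _]] := open_normal_cent_quot (N_open_normal i1); exists c.
pose P c := `[< exists2 i, (1 <= i)%N & cent i = (c%:R)%:E >].
have [c0 c0E] := cent_nat 1%N erefl.
have P_c0 : exists c, P c by exists c0; apply/asboolP; exists 1%N.
have P_le_B c : P c -> (c <= B)%N.
  by move=> /asboolP[i i1 ci]; have := cent_le_B i i1; rewrite ci lee_fin ler_nat.
have [cm /asboolP[i0 i01 cent_i0] cm_max] := ex_maxnP P_c0 P_le_B.
have cent_le_cm i : (1 <= i)%N -> cent i <= (cm%:R)%:E.
  move=> i1; have [c ci] := cent_nat i i1; rewrite ci lee_fin ler_nat.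
  by apply: cm_max; apply/asboolP; exists i.
exists cm, i0; split => // [|i i0i].
  apply/le_anti/andP; split; last by rewrite -cent_i0 cent_le_sup.
  by apply: ge_ereal_sup => _ [i i1 <-]; apply: cent_le_cm.
have i1 : (1 <= i)%N by apply: leq_trans i0i.
apply/le_anti/andP; split; first exact: cent_le_cm.
rewrite -cent_i0; apply: (le_ecard_cent_quot (N_open_normal i1) (N_open_normal i01)).
exact: (chain_le N_decr i01 i0i).
Qed.

Lemma mu_conj_class_bounded cm i0 : (1 <= i0)%N ->
  (forall i, (i0 <= i)%N -> cent i = (cm%:R)%:E) ->
  mu (conj_class x : set (borel G)) = ((cm%:R)^-1)%:E.
Proof.
move=> i01 cent_cm; apply: (mu_conj_class_eventually i01) => n.
have n_i0 : (1 <= n + i0)%N by apply: leq_trans (leq_addl n i0).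
have [c [_ cent_c ->]] := open_normal_cent_quot (N_open_normal n_i0).
move: cent_c; rewrite cent_cm ?leq_addl // => /eqP.
by rewrite eqe eqr_nat => /eqP ->.
Qed.

Lemma sup_chain_unbounded :
  (forall B : nat, exists2 i, (1 <= i)%N & (B%:R)%:E < cent i) -> c1 = +oo.
Proof.
move=> cent_unbounded.
have lt_c1 B : (B%:R)%:E < c1.
  by have [i i1 B_lt] := cent_unbounded B; apply: lt_le_trans B_lt (cent_le_sup i1).
case: (ereal_sup _) lt_c1 => [r lt_r | // | /(_ 0%N)]; last by rewrite ltNge leNye.
by have := lt_r (Num.trunc r).+1; rewrite lte_fin ltNge (ltW (truncnS_gt r)).
Qed.

Lemma mu_conj_class_unbounded :
  (forall B : nat, exists2 i, (1 <= i)%N & (B%:R)%:E < cent i) ->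
  mu (conj_class x : set (borel G)) = 0.
Proof.
move=> cent_unbounded; apply/le_anti; rewrite measure_ge0 andbT.
apply/lee_addgt0Pr => e e_gt0; rewrite add0e.
have [i i1] := cent_unbounded (Num.trunc e^-1).
have [c [c_gt0 -> mu_c]] := open_normal_cent_quot (N_open_normal i1).
rewrite lte_fin ltr_nat => lt_c.
apply: (@le_trans _ _ (mu (setmul (conj_class x) (N i)))).
  apply: le_measure; rewrite ?inE.
  - by apply: borel_measurable_closed; apply: closed_conj_class.
  - by apply: borel_measurable_open; apply: open_setmul; case: (N_open_normal i1).
  - by apply: setmul_subl; apply: normal1 (N_open_normal i1).1.
rewrite mu_c lee_fin invf_ple ?posrE ?ltr0n //.
by apply/ltW/(lt_le_trans (truncnS_gt _)); rewrite ler_nat.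
Qed.

Lemma mu_conj_class_sup :
  mu (conj_class x : set (borel G)) = match c1 with EFin r => (r^-1)%:E | _ => 0 end.
Proof.
have [[B cent_le_B]|cent_unbounded] :=
  pselect (exists B : nat, forall i, (1 <= i)%N -> cent i <= (B%:R)%:E).
  have [cm [i0 [i01 -> cent_cm]]] := sup_chain_bounded cent_le_B.
  exact: mu_conj_class_bounded i01 cent_cm.
have cent_gt B : exists2 i, (1 <= i)%N & (B%:R)%:E < cent i.
  apply: contrapT => cent_le; apply: cent_unbounded; exists B => i i1.
  by rewrite leNgt; apply/negP => B_lt; apply: cent_le; exists i.
by rewrite (sup_chain_unbounded cent_gt) (mu_conj_class_unbounded cent_gt).
Qed.

End CentraliserOrders.

Theorem proposition5p1 (R : realType) (G : profinite_group)
  (hG : @second_countable G)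
  (mu : probability (borel G) R) (hmu : haar_prob mu)
  (x : G) (N : nat -> set G)
  (hNo : forall i, (1 <= i)%N -> open_normal (N i))
  (hNdec : forall i, (1 <= i)%N -> N i.+1 `<=` N i)
  (hNcap : \bigcap_(i in [set i | (1 <= i)%N]) N i = [set pg_one G]) :
  let c1 := ereal_sup [set ecard R (cent_quot (N i) x) | i in [set i | (1 <= i)%N]] in
  let c2 := ereal_sup [set ecard R (cent_quot M x) | M in @open_normal G] in
  let c3 := ereal_sup [set ecard R (cent_quot K x) | K in @closed_normal G] in
  [/\ c1 = c2, c2 = c3 &
      mu (conj_class x : set (borel G)) =
        match c1 with EFin r => (r^-1)%:E | _ => 0 end].
Proof.
move=> c1 c2 c3.
have c12 : c1 <= c2.
  by apply: ereal_sup_le => _ [i i1 <-]; exists (N i) => //; apply: hNo.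
have c23 : c2 <= c3.
  apply: ereal_sup_le => _ [M oM <-]; exists M => //.
  by split; [case: oM | apply: open_normal_closed].
have c31 : c3 <= c1 := sup_closed_le_chain hmu x hNo hNdec hNcap.
split; first by apply/le_anti; rewrite c12 (le_trans c23 c31).
  by apply/le_anti; rewrite c23 (le_trans c31 c12).
exact: mu_conj_class_sup.
Qed.
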